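(* Let $(F,+,\cdot)$ be a left near-field and let $((K,\boxplus,\boxdot),(K,\cdot))$ be an elementary near-vector space associated with $(F,+,\cdot)$. Then $1\in Q(K)$, so $\boxplus_1:=+_1$ is defined, and there exists a right quasi-multiplicative bijection $\phi:(K,\cdot)\to(F,\cdot)$ such that $\alpha\boxplus_1\beta=\phi^{-1}(\phi(\alpha)+\phi(\beta))$ for all $\alpha,\beta\in K$; moreover $(K,\boxplus_1,\cdot)$ is a left near-field.
   Context: A scalar group is a tuple $(F,\cdot,1,0,-1)$ where $(F,\cdot,1)$ is a monoid, $0\ne1$, $0\alpha=\alpha0=0$, $\{1,-1\}$ is exactly the solution set of $x^2=1$, and $(F\setminus\{0\},\cdot)$ is a group. A left near-field $(F,+,\cdot)$: $(F,+)$ a group with identity $0$, $(F\setminus\{0\},\cdot)$ a group, $0\cdot\alpha=0$, $\gamma(\alpha+\beta)=\gamma\alpha+\gamma\beta$. A (left) near-vector space $((V,\boxplus,\boxdot),(F,\cdot))$: $(F,\cdot)$ scalar group, $(V,\boxplus)$ abelian group, $\boxdot:F\times V\to V$ with $1\boxdot v=v$, $\alpha\boxdot(\beta\boxdot v)=(\alpha\beta)\boxdot v$, $\alpha\boxdot(v\boxplus w)=\alpha\boxdot v\boxplus\alpha\boxdot w$, $(-1)\boxdot v=\boxminus v$, $0\boxdot v=0$, freeness, and quasi-kernel $Q(V)=\{v:\forall\alpha,\beta\,\exists\gamma,\ \alpha\boxdot v\boxplus\beta\boxdot v=\gamma\boxdot v\}$ generating $V$; for $u\in Q(V)\setminus\{0\}$,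 $\alpha+_u\beta$ is the unique $\gamma$ with $\alpha\boxdot u\boxplus\beta\boxdot u=\gamma\boxdot u$. An isomorphism $(\Psi,\varphi)$ of near-vector spaces: additive bijection $\Psi$ and group isomorphism $\varphi$ between the nonzero scalars with $\Psi(\alpha\boxdot_1u)=\varphi(\alpha)\boxdot_2\Psi(u)$. The canonical near-vector space of $(F,+,\cdot)$ is $((F,+,\cdot),(F,\cdot))$. An elementary near-vector space associated with a left near-field $(F,+,\cdot)$ is a near-vector space of the form $((K,\boxplus,\boxdot),(K,\cdot))$ (vectors and scalars on the same set $K$) isomorphic to the canonical near-vector space of $(F,+,\cdot)$. A right quasi-multiplicative bijection $\phi:(K,\cdot)\to(F,\cdot)$ is a bijection of the form $\phi(\alpha)=\varphi(\alpha)\lambda$ with $\varphi$ a multiplicative bijection (bijective monoid morphism) and $\lambda\in F\setminus\{0\}$. *)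

Definition scalar_group {F : Type} (mul : F -> F -> F) (one zero mone : F) : Prop :=
  (forall a b c, mul a (mul b c) = mul (mul a b) c) /\
  (forall a, mul one a = a /\ mul a one = a) /\
  zero <> one /\
  (forall a, mul zero a = zero /\ mul a zero = zero) /\
  (forall x, mul x x = one <-> (x = one \/ x = mone)) /\
  (forall a b, a <> zero -> b <> zero -> mul a b <> zero) /\
  (forall a, a <> zero -> exists b, b <> zero /\ mul a b = one /\ mul b a = one).

Definition left_near_field {F : Type} (add mul : F -> F -> F) (zero one : F) : Prop :=
  (forall a b c, add a (add b c) = add (add a b) c) /\
  (forall a, add zero a = a /\ add a zero = a) /\
  (forall a, exists b, add a b = zero /\ add b a = zero) /\
  one <> zero /\
  (forall a b, a <> zero -> b <> zero -> mul a b <> zero) /\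
  (forall a b c, a <> zero -> b <> zero -> c <> zero ->
      mul a (mul b c) = mul (mul a b) c) /\
  (forall a, a <> zero -> mul one a = a /\ mul a one = a) /\
  (forall a, a <> zero -> exists b, b <> zero /\ mul a b = one /\ mul b a = one) /\
  (forall a, mul zero a = zero) /\
  (forall a b c, mul c (add a b) = add (mul c a) (mul c b)).

Definition in_Q {V F : Type} (vadd : V -> V -> V) (smul : F -> V -> V) (v : V) : Prop :=
  forall a b : F, exists c : F, vadd (smul a v) (smul b v) = smul c v.

Definition near_vector_space {V F : Type} (vadd : V -> V -> V) (vzero : V)
    (mul : F -> F -> F) (one zero mone : F) (smul : F -> V -> V) : Prop :=
  scalar_group mul one zero mone /\
  (forall u v w, vadd u (vadd v w) = vadd (vadd u v) w) /\
  (forall u v, vadd u v = vadd v u) /\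
  (forall v, vadd vzero v = v) /\
  (forall v, exists w, vadd v w = vzero) /\
  (forall v, smul one v = v) /\
  (forall a b v, smul a (smul b v) = smul (mul a b) v) /\
  (forall a v w, smul a (vadd v w) = vadd (smul a v) (smul a w)) /\
  (forall v, vadd (smul mone v) v = vzero) /\
  (forall v, smul zero v = vzero) /\
  (forall a b v, smul a v = smul b v -> v = vzero \/ a = b) /\
  (* Q(V) generates V as an additive group *)
  (forall S : V -> Prop,
      S vzero ->
      (forall u v, S u -> S v -> S (vadd u v)) ->
      (forall u w, S u -> vadd u w = vzero -> S w) ->
      (forall v, in_Q vadd smul v -> S v) ->
      forall v, S v).

(** (Psi, phi) is an isomorphism of near-vector spaces from
    ((V1,vadd1,smul1),(F1,mul1)) to ((V2,vadd2,smul2),(F2,mul2));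
    phi is only relevant on nonzero scalars. *)
Definition nvs_isomorphism {V1 F1 V2 F2 : Type}
    (vadd1 : V1 -> V1 -> V1) (mul1 : F1 -> F1 -> F1) (zero1 : F1) (smul1 : F1 -> V1 -> V1)
    (vadd2 : V2 -> V2 -> V2) (mul2 : F2 -> F2 -> F2) (zero2 : F2) (smul2 : F2 -> V2 -> V2)
    (Psi : V1 -> V2) (phi : F1 -> F2) : Prop :=
  (forall u v, Psi (vadd1 u v) = vadd2 (Psi u) (Psi v)) /\
  (forall u v, Psi u = Psi v -> u = v) /\
  (forall w, exists u, Psi u = w) /\
  (forall a, a <> zero1 -> phi a <> zero2) /\
  (forall a b, a <> zero1 -> b <> zero1 -> phi (mul1 a b) = mul2 (phi a) (phi b)) /\
  (forall a b, a <> zero1 -> b <> zero1 -> phi a = phi b -> a = b) /\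
  (forall c, c <> zero2 -> exists a, a <> zero1 /\ phi a = c) /\
  (forall a u, a <> zero1 -> Psi (smul1 a u) = smul2 (phi a) (Psi u)).

(** Elementary near-vector space ((K,vadd,smul),(K,mul)) associated with the
    left near-field (F,addF,mulF): a near-vector space isomorphic to the
    canonical near-vector space ((F,addF,mulF),(F,mulF)). *)
Definition elementary_nvs {K F : Type}
    (vadd : K -> K -> K) (vzero : K) (mul : K -> K -> K) (one zero mone : K)
    (smul : K -> K -> K)
    (addF mulF : F -> F -> F) (zeroF : F) : Prop :=
  near_vector_space vadd vzero mul one zero mone smul /\
  exists (Psi : K -> F) (phi : K -> F),
    nvs_isomorphism vadd mul zero smul addF mulF zeroF mulF Psi phi.

Definition right_quasi_mult_bij {K F : Type}
    (mulK : K -> K -> K) (oneK : K) (mulF : F -> F -> F) (zeroF oneF : F)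
    (phi : K -> F) : Prop :=
  (forall a b, phi a = phi b -> a = b) /\ (forall c, exists a, phi a = c) /\
  exists (varphi : K -> F) (lambda : F),
    lambda <> zeroF /\
    (forall a b, varphi a = varphi b -> a = b) /\ (forall c, exists a, varphi a = c) /\
    varphi oneK = oneF /\
    (forall a b, varphi (mulK a b) = mulF (varphi a) (varphi b)) /\
    (forall a, phi a = mulF (varphi a) lambda).

From Stdlib Require Import Classical ClassicalEpsilon.

(* Extending the scalar isomorphism [phi0] by [0 |-> 0] gives a multiplicative
   bijection [vp : K -> F] with [Psi (a . 1) = vp a * lam], where [lam = Psi 1].
   So [phi a := vp a * lam] is right quasi-multiplicative and [a.1 + b.1] is
   [phi^-1 (phi a + phi b) . 1].  Since [phi (c a) = vp c * phi a], left
   distributivity of [F] pulls back along [phi], making [(K, +_1, .)] a left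
   near-field. *)

Set Implicit Arguments.
Unset Strict Implicit.

Section LeftNearFieldTheory.
Variables (F : Type) (add mul : F -> F -> F) (zero one : F).
Hypothesis HF : left_near_field add mul zero one.

Lemma nf_add_idem_eq0 x : add x x = x -> x = zero.
Proof.
  destruct HF as (addA & add0 & addN & _).
  intros E. destruct (addN x) as [y [_ Eyx]].
  assert (E' : add y (add x x) = add y x) by now rewrite E.
  now rewrite addA, Eyx, (proj1 (add0 x)) in E'.
Qed.

Lemma nf_mulx0 x : mul x zero = zero.
Proof.
  destruct HF as (_ & add0 & _ & _ & _ & _ & _ & _ & _ & mulDr).
  apply nf_add_idem_eq0. now rewrite <- mulDr, (proj1 (add0 zero)).
Qed.

Lemma nf_mul0x x : mul zero x = zero.
Proof. now destruct HF as (_ & _ & _ & _ & _ & _ & _ & _ & mul0x & _). Qed.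

Lemma nf_mulA a b c : mul a (mul b c) = mul (mul a b) c.
Proof.
  destruct HF as (_ & _ & _ & _ & _ & mulA & _ & _ & mul0x & _).
  destruct (classic (a = zero)) as [->|Ha]; [now rewrite !mul0x|].
  destruct (classic (b = zero)) as [->|Hb]; [now rewrite mul0x, !nf_mulx0, mul0x|].
  destruct (classic (c = zero)) as [->|Hc]; [now rewrite !nf_mulx0|].
  now apply mulA.
Qed.

Lemma nf_mul1l a : mul one a = a.
Proof.
  destruct HF as (_ & _ & _ & _ & _ & _ & mul1 & _).
  destruct (classic (a = zero)) as [->|Ha]; [apply nf_mulx0 | now apply mul1].
Qed.

Lemma nf_mul1r a : mul a one = a.
Proof.
  destruct HF as (_ & _ & _ & _ & _ & _ & mul1 & _ & mul0x & _).
  destruct (classic (a = zero)) as [->|Ha]; [apply mul0x | now apply mul1].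
Qed.

Lemma nf_mul_idem_eq1 x : x <> zero -> mul x x = x -> x = one.
Proof.
  destruct HF as (_ & _ & _ & _ & _ & _ & _ & mulV & _).
  intros Hx E. destruct (mulV x Hx) as [y [_ [_ Eyx]]].
  assert (E' : mul y (mul x x) = mul y x) by now rewrite E.
  now rewrite nf_mulA, Eyx, nf_mul1l in E'.
Qed.

Lemma nf_mulIr l a b : l <> zero -> mul a l = mul b l -> a = b.
Proof.
  destruct HF as (_ & _ & _ & _ & _ & _ & _ & mulV & _).
  intros Hl E. destruct (mulV l Hl) as [m [_ [Elm _]]].
  now rewrite <- (nf_mul1r a), <- (nf_mul1r b), <- Elm, !nf_mulA, E.
Qed.

Lemma nf_mulr_surj l c : l <> zero -> exists a, mul a l = c.
Proof.
  destruct HF as (_ & _ & _ & _ & _ & _ & _ & mulV & _).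
  intros Hl. destruct (mulV l Hl) as [m [_ [_ Eml]]].
  exists (mul c m). now rewrite <- nf_mulA, Eml, nf_mul1r.
Qed.

End LeftNearFieldTheory.

Lemma bijective_inverse (A B : Type) (f : A -> B) :
  (forall a b, f a = f b -> a = b) -> (forall c, exists a, f a = c) ->
  exists g : B -> A, (forall a, g (f a) = a) /\ (forall x, f (g x) = x).
Proof.
  intros f_inj f_surj.
  exists (fun x => proj1_sig (constructive_indefinite_description _ (f_surj x))).
  assert (fK : forall x, f (proj1_sig (constructive_indefinite_description _ (f_surj x))) = x)
    by (intros x; exact (proj2_sig (constructive_indefinite_description _ (f_surj x)))).
  split; [intros a; apply f_inj|]; apply fK.
Qed.

Section ExtendByZero.
Variables (K F : Type) (mulK : K -> K -> K) (oneK zeroK moneK : K).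
Variables (addF mulF : F -> F -> F) (zeroF oneF : F) (phi0 : K -> F).
Hypothesis HK : scalar_group mulK oneK zeroK moneK.
Hypothesis HF : left_near_field addF mulF zeroF oneF.
Hypothesis phi0_neq0 : forall a, a <> zeroK -> phi0 a <> zeroF.
Hypothesis phi0_mul : forall a b, a <> zeroK -> b <> zeroK ->
  phi0 (mulK a b) = mulF (phi0 a) (phi0 b).
Hypothesis phi0_inj : forall a b, a <> zeroK -> b <> zeroK -> phi0 a = phi0 b -> a = b.
Hypothesis phi0_surj : forall c, c <> zeroF -> exists a, a <> zeroK /\ phi0 a = c.

Definition extend_by_zero (a : K) : F :=
  if excluded_middle_informative (a = zeroK) then zeroF else phi0 a.

Lemma extend_by_zero0 : extend_by_zero zeroK = zeroF.
Proof. unfold extend_by_zero. now destruct excluded_middle_informative. Qed.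

Lemma extend_by_zero_neq0 a : a <> zeroK -> extend_by_zero a = phi0 a.
Proof. unfold extend_by_zero. now destruct excluded_middle_informative. Qed.

Lemma extend_by_zero_mul a b :
  extend_by_zero (mulK a b) = mulF (extend_by_zero a) (extend_by_zero b).
Proof.
  destruct HK as (_ & _ & _ & mul0 & _ & mul_neq0 & _).
  destruct (classic (a = zeroK)) as [->|Ha].
  { now rewrite (proj1 (mul0 b)), extend_by_zero0, (nf_mul0x HF). }
  destruct (classic (b = zeroK)) as [->|Hb].
  { now rewrite (proj2 (mul0 a)), extend_by_zero0, (nf_mulx0 HF). }
  rewrite !extend_by_zero_neq0 by auto. now apply phi0_mul.
Qed.

Lemma extend_by_zero1 : extend_by_zero oneK = oneF.
Proof.
  destruct HK as (_ & mul1 & neq01 & _).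
  assert (H1 : oneK <> zeroK) by auto.
  apply (nf_mul_idem_eq1 HF).
  - rewrite extend_by_zero_neq0 by exact H1. now apply phi0_neq0.
  - now rewrite <- extend_by_zero_mul, (proj1 (mul1 oneK)).
Qed.

Lemma extend_by_zero_inj a b : extend_by_zero a = extend_by_zero b -> a = b.
Proof.
  destruct (classic (a = zeroK)) as [->|Ha];
    destruct (classic (b = zeroK)) as [->|Hb]; intros E; auto;
    rewrite ?extend_by_zero0, ?extend_by_zero_neq0 in E by assumption.
  - now destruct (phi0_neq0 Hb).
  - now destruct (phi0_neq0 Ha).
  - now apply phi0_inj.
Qed.

Lemma extend_by_zero_surj c : exists a, extend_by_zero a = c.
Proof.
  destruct (classic (c = zeroF)) as [->|Hc].
  - exists zeroK. apply extend_by_zero0.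
  - destruct (phi0_surj Hc) as [a [Ha <-]]. exists a. now apply extend_by_zero_neq0.
Qed.

End ExtendByZero.

Section TransportedNearField.
Variables (K F : Type) (mulK : K -> K -> K) (oneK zeroK moneK : K).
Variables (addF mulF : F -> F -> F) (zeroF oneF : F).
Variables (phi : K -> F) (phiinv : F -> K) (vp : K -> F).
Hypothesis HK : scalar_group mulK oneK zeroK moneK.
Hypothesis HF : left_near_field addF mulF zeroF oneF.
Hypothesis phiK : forall a, phiinv (phi a) = a.
Hypothesis phiinvK : forall x, phi (phiinv x) = x.
Hypothesis phi0 : phi zeroK = zeroF.
Hypothesis phi_mul : forall c a, phi (mulK c a) = mulF (vp c) (phi a).

Definition transported_add (a b : K) : K := phiinv (addF (phi a) (phi b)).

Lemma transported_left_near_field :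
  left_near_field transported_add mulK zeroK oneK.
Proof.
  destruct HF as (addA & add0 & addN & _ & _ & _ & _ & _ & _ & mulDr).
  destruct HK as (mulA & mul1 & neq01 & mul0 & _ & mul_neq0 & mulV).
  assert (phi_inj : forall a b, phi a = phi b -> a = b)
    by (intros a b E; now rewrite <- (phiK a), E, phiK).
  unfold transported_add.
  split; [intros a b c; now rewrite !phiinvK, addA|].
  split; [intros a; now rewrite phi0, (proj1 (add0 _)), (proj2 (add0 _)), phiK|].
  split.
  { intros a. destruct (addN (phi a)) as [b [Eab Eba]].
    exists (phiinv b). now rewrite phiinvK, Eab, Eba, <- phi0, phiK. }
  split; [auto|].
  split; [exact mul_neq0|].
  split; [intros a b c _ _ _; apply mulA|].
  split; [intros a _; apply mul1|].
  split; [exact mulV|].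
  split; [intros a; apply mul0|].
  intros a b c. apply phi_inj. now rewrite phiinvK, !phi_mul, phiinvK, mulDr.
Qed.

End TransportedNearField.

Section RightTranslate.
Variables (K F : Type) (mulK : K -> K -> K) (oneK : K).
Variables (addF mulF : F -> F -> F) (zeroF oneF : F) (vp : K -> F) (lam : F).
Hypothesis HF : left_near_field addF mulF zeroF oneF.
Hypothesis lam_neq0 : lam <> zeroF.
Hypothesis vp_inj : forall a b, vp a = vp b -> a = b.
Hypothesis vp_surj : forall c, exists a, vp a = c.
Hypothesis vp1 : vp oneK = oneF.
Hypothesis vp_mul : forall a b, vp (mulK a b) = mulF (vp a) (vp b).

Lemma right_quasi_mult_bij_mulr :
  right_quasi_mult_bij mulK oneK mulF zeroF oneF (fun a => mulF (vp a) lam).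
Proof.
  split; [intros a b E; exact (vp_inj (nf_mulIr HF lam_neq0 E))|].
  split.
  { intros c. destruct (nf_mulr_surj HF c lam_neq0) as [x <-].
    destruct (vp_surj x) as [a <-]. now exists a. }
  exists vp, lam. repeat split; assumption.
Qed.

End RightTranslate.

Section IsomorphismToCanonical.
Variables (K F : Type) (vadd smul : K -> K -> K) (vzero zeroK : K).
Variables (addF mulF : F -> F -> F) (zeroF oneF : F) (Psi phi0 : K -> F).
Hypothesis HF : left_near_field addF mulF zeroF oneF.
Hypothesis vadd0 : forall v, vadd vzero v = v.
Hypothesis smul0 : forall v, smul zeroK v = vzero.
Hypothesis Psi_add : forall v w, Psi (vadd v w) = addF (Psi v) (Psi w).
Hypothesis Psi_smul0 : forall a v, a <> zeroK -> Psi (smul a v) = mulF (phi0 a) (Psi v).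

Lemma iso_smul_extend_by_zero a v :
  Psi (smul a v) = mulF (extend_by_zero zeroK zeroF phi0 a) (Psi v).
Proof.
  destruct (classic (a = zeroK)) as [->|Ha].
  - assert (Psi0 : Psi vzero = zeroF)
      by (apply (nf_add_idem_eq0 HF); now rewrite <- Psi_add, vadd0).
    now rewrite smul0, Psi0, extend_by_zero0, (nf_mul0x HF).
  - rewrite extend_by_zero_neq0 by exact Ha. now apply Psi_smul0.
Qed.

End IsomorphismToCanonical.

Section QuasiKernelAddition.
Variables (K F : Type) (vadd : K -> K -> K) (smul : K -> K -> K) (u : K).
Variables (addF mulF : F -> F -> F) (zeroF oneF : F).
Variables (Psi : K -> F) (vp : K -> F) (lam : F) (phiinv : F -> K).
Hypothesis HF : left_near_field addF mulF zeroF oneF.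
Hypothesis Psi_add : forall v w, Psi (vadd v w) = addF (Psi v) (Psi w).
Hypothesis Psi_inj : forall v w, Psi v = Psi w -> v = w.
Hypothesis Psi_smul : forall a v, Psi (smul a v) = mulF (vp a) (Psi v).
Hypothesis Psi_u : Psi u = zeroF \/ Psi u = lam.
Hypothesis phiinvK : forall x, mulF (vp (phiinv x)) lam = x.

Lemma smul_add_transport a b :
  vadd (smul a u) (smul b u) =
  smul (phiinv (addF (mulF (vp a) lam) (mulF (vp b) lam))) u.
Proof.
  apply Psi_inj. rewrite Psi_add, !Psi_smul.
  destruct Psi_u as [-> | ->].
  - rewrite !(nf_mulx0 HF). now destruct HF as (_ & add0 & _); apply add0.
  - now rewrite phiinvK.
Qed.

End QuasiKernelAddition.

Theorem mainTheorem11 (F : Type) (addF mulF : F -> F -> F) (zeroF oneF : F)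
  (K : Type) (vadd : K -> K -> K) (vzero : K) (mul : K -> K -> K) (one zero mone : K)
  (smul : K -> K -> K) :
  left_near_field addF mulF zeroF oneF ->
  elementary_nvs vadd vzero mul one zero mone smul addF mulF zeroF ->
  in_Q vadd smul one /\
  exists (phi : K -> F) (phiinv : F -> K),
    right_quasi_mult_bij mul one mulF zeroF oneF phi /\
    (forall a, phiinv (phi a) = a) /\ (forall x, phi (phiinv x) = x) /\
    (* alpha +_1 beta = phi^{-1}(phi alpha + phi beta) *)
    (forall a b, vadd (smul a one) (smul b one) = smul (phiinv (addF (phi a) (phi b))) one) /\
    left_near_field (fun a b => phiinv (addF (phi a) (phi b))) mul zero one.
Proof.
  intros HF [HN [Psi [phi0 Hiso]]].
  destruct HN as (HK & _ & _ & vadd0 & _ & _ & _ & _ & _ & smul0 & _).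
  destruct Hiso as (Psi_add & Psi_inj & _ & phi0_neq0 & phi0_mul & phi0_inj & phi0_surj & Psi_smul0).
  set (vp := extend_by_zero zero zeroF phi0).
  assert (Psi_smul := iso_smul_extend_by_zero HF vadd0 smul0 Psi_add Psi_smul0).
  (* [lam] is [Psi 1] unless [1] is the zero vector, when any [lam <> 0] will do. *)
  assert (Hlam : exists lam, lam <> zeroF /\ (Psi one = zeroF \/ Psi one = lam)).
  { destruct (classic (Psi one = zeroF)) as [Psi1 | Psi1].
    - exists oneF. split; [now destruct HF as (_ & _ & _ & neq10 & _) | now left].
    - exists (Psi one). auto. }
  destruct Hlam as [lam [lam_neq0 Psi_one]].
  assert (Hphi := right_quasi_mult_bij_mulr HF lam_neq0
    (extend_by_zero_inj phi0_neq0 phi0_inj) (extend_by_zero_surj phi0_surj)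
    (extend_by_zero1 HK HF phi0_neq0 phi0_mul) (extend_by_zero_mul HK HF phi0_mul)).
  destruct (bijective_inverse (proj1 Hphi) (proj1 (proj2 Hphi))) as [phiinv [phiK phiinvK]].
  assert (Hform := smul_add_transport HF Psi_add Psi_inj Psi_smul Psi_one phiinvK).
  split; [intros a b; eexists; apply Hform|].
  exists (fun a => mulF (vp a) lam), phiinv.
  split; [exact Hphi|]. split; [exact phiK|]. split; [exact phiinvK|]. split; [exact Hform|].
  apply (transported_left_near_field (vp := vp) HK HF phiK phiinvK).
  - unfold vp. now rewrite extend_by_zero0, (nf_mul0x HF).
  - intros c a. unfold vp. now rewrite (extend_by_zero_mul HK HF phi0_mul), (nf_mulA HF).
Qed.
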